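(* For every $d\in\mathbb{N}$, $d\ge1$, we have $\mathcal H_1^d\subset\mathcal N_d=b_d^{-1}(\mathcal H_1^d)$.
   Context: Identify $b=(b_1,\dots,b_d)\in\mathbb{R}^d$ with the monic polynomial $z^d+\sum_{k=1}^d b_k z^{d-k}$, and let $\mathcal H_1^d\subset\mathbb{R}^d$ be the set of $b$ for which this polynomial is hyperbolic (has only real roots). A sequence $a=(a_1,\dots,a_d)\in\mathbb{R}^d$ is a Nuij sequence if for every hyperbolic polynomial $p\in\mathbb{R}[z]$ of degree $d$, the polynomial $p(z)+\sum_{k=1}^d a_k s^k p^{(k)}(z)$ is hyperbolic for every $s\in\mathbb{R}$; $\mathcal N_d$ is the set of Nuij sequences in $\mathbb{R}^d$. The linear map $b_d:\mathbb{R}^d\to\mathbb{R}^d$ is $b_d(a_1,\dots,a_d)=\big(da_1,\dots,\tfrac{d!}{(d-k)!}a_k,\dots,d!\,a_d\big)$. *)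

From mathcomp Require Import all_boot all_order all_algebra.
From mathcomp Require Import reals.
Set Implicit Arguments. Unset Strict Implicit. Unset Printing Implicit Defensive.
Import Order.TTheory GRing.Theory Num.Theory.
Local Open Scope ring_scope.

(* A real polynomial is hyperbolic if all its (complex) roots are real,
   i.e. it splits into real linear factors over R. *)
Definition hyperbolic (R : realType) (p : {poly R}) : Prop :=
  exists s : seq R, p = lead_coef p *: \prod_(x <- s) ('X - x%:P).

(* b = (b_1,...,b_d) (stored 0-based: b 0 k = b_{k+1}) |-> z^d + sum_k b_k z^(d-k) *)
Definition monic_of (R : realType) (d : nat) (b : 'rV[R]_d) : {poly R} :=
  'X^d + \sum_(k < d) b 0 k *: 'X^(d - k.+1).

Definition H1 (R : realType) (d : nat) (b : 'rV[R]_d) : Prop :=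
  hyperbolic (monic_of b).

(* Nuij sequences N_d: a = (a_1,...,a_d) stored 0-based. *)
Definition Nuij (R : realType) (d : nat) (a : 'rV[R]_d) : Prop :=
  forall p : {poly R}, size p = d.+1 -> hyperbolic p ->
    forall s : R,
      hyperbolic (p + \sum_(k < d) (a 0 k * s ^+ k.+1) *: p^`(k.+1)).

(* b_d(a)_k = d!/(d-k)! a_k (k = 1..d); d!/(d-k)! is the falling factorial d ^_ k *)
Definition bmap (R : realType) (d : nat) (a : 'rV[R]_d) : 'rV[R]_d :=
  \row_(k < d) ((d ^_ k.+1)%:R * a 0 k).

From mathcomp Require Import all_boot all_order all_algebra.
From mathcomp Require Import reals.
From mathcomp Require Import ring lra zify.
From mathcomp.real_closed Require Import complex.
Set Implicit Arguments. Unset Strict Implicit. Unset Printing Implicit Defensive.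
Import Order.TTheory GRing.Theory Num.Theory.
Local Open Scope ring_scope.
Local Open Scope complex_scope.

(* If [monic_of b] splits as [\prod (X - x_i)], then [p + \sum_k b_k s^k p^(k)] is
   [\prod (1 - s x_i D)] applied to [p], and each factor [p - c p'] with [c] real keeps [p]
   real-rooted: at a point [w] of the upper half-plane, [Im (p'/p)(w) = \sum Im (w - x)^-1 < 0].
   For the characterisation through [b_d], fix [z] in the upper half-plane.  If [b_d a] has roots
   [x_i], the value at [z] of [p + \sum_k a_k s^k p^(k)] is obtained from [p] by [d] successive
   normalised polar derivatives with respect to the points [z - s x_i], which all lie on the
   horizontal line through [z]; by Laguerre's theorem each of them keeps the closed half-plane
   above that line free of roots, so the value is nonzero.  Conversely, a Nuij sequence [a]
   applied to [X^d] at [s = 1] gives [monic_of (b_d a)]. *)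

Local Notation Re := complex.Re.
Local Notation Im := complex.Im.

Lemma horner_deriv_prod_XsubC (K : fieldType) (rs : seq K) (w : K) :
  w \notin rs ->
  (\prod_(y <- rs) ('X - y%:P))^`().[w] =
  (\prod_(y <- rs) ('X - y%:P)).[w] * \sum_(y <- rs) (w - y)^-1.
Proof.
elim: rs => [|y rs IH]; first by rewrite !big_nil derivC !hornerE.
rewrite inE negb_or => /andP[wy /IH {}IH].
have wy0 : w - y != 0 by rewrite subr_eq0.
rewrite !big_cons derivM derivXsubC mul1r !hornerE IH mulrDr.
by rewrite [_ * (w - y)^-1]mulrC !mulrA mulVf // mul1r addrC; congr (_ + _); ring.
Qed.

Lemma horner_logderiv (K : fieldType) (q : {poly K}) (c : K) (rs : seq K) (w : K) :
  q = c *: \prod_(y <- rs) ('X - y%:P) -> ~~ root q w ->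
  q^`().[w] = q.[w] * \sum_(y <- rs) (w - y)^-1.
Proof.
move=> ->; have [->|c0] := eqVneq c 0; first by rewrite scale0r root0.
rewrite rootZ // root_prod_XsubC => /horner_deriv_prod_XsubC.
by rewrite derivZ !hornerZ => ->; rewrite mulrA.
Qed.

Lemma sum_coef_XsubC_mul (K : comNzRingType) (V : lmodType K) (G : {poly K}) (x : K) (n : nat)
    (F : nat -> V) :
  (size G <= n.+1)%N ->
  \sum_(j < n.+2) (('X - x%:P) * G)`_(n.+1 - j) *: F j =
  \sum_(j < n.+1) G`_(n - j) *: (F j - x *: F j.+1).
Proof.
move=> sizeG; under eq_bigr do rewrite mulrBl coefB coefXM coefCM scalerBl.
under [RHS]eq_bigr do rewrite scalerBr.
rewrite !sumrB; congr (_ - _).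
  rewrite big_ord_recr /= subnn scale0r addr0; apply: eq_bigr => j _ /=.
  by rewrite subSn ?leq_ord.
rewrite big_ord_recl /= subn0 [G`_n.+1]nth_default // mulr0 scale0r add0r.
by apply: eq_bigr => j _; rewrite scalerA mulrC.
Qed.

(* [\prod_(x <- r) (1 - s x D)] applied to [q], where [D] is differentiation. *)
Definition sub_deriv_comp (K : comNzRingType) (s : K) (r : seq K) (q : {poly K}) :=
  foldr (fun x p => p - (s * x) *: p^`()) q r.

Lemma sub_deriv_compE (K : comNzRingType) (s : K) (r : seq K) (q : {poly K}) :
  sub_deriv_comp s r q =
  \sum_(j < (size r).+1) (s ^+ j * (\prod_(x <- r) ('X - x%:P))`_(size r - j)) *: q^`(j).
Proof.
elim: r => [|x r IH] /=; first by rewrite big_ord1 big_nil coefC mulr1 scale1r.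
rewrite IH big_cons.
under [RHS]eq_bigr do rewrite mulrC -scalerA.
rewrite (sum_coef_XsubC_mul x (fun j => s ^+ j *: q^`(j))) ?size_prod_XsubC //.
rewrite (big_morph _ (@derivD _) (@deriv0 _)) scaler_sumr -sumrB; apply: eq_bigr => j _.
rewrite derivZ -derivnS !scalerBr !scalerA exprS.
by congr (_ *: _ - _ *: _); ring.
Qed.

Definition polar_deriv (K : fieldType) (c : K) (N : nat) (q : {poly K}) : {poly K} :=
  q + N%:R^-1 *: ((c%:P - 'X) * q^`()).

Lemma horner_derivn_polar (K : fieldType) (c : K) (N : nat) (q : {poly K}) (j : nat) (z : K) :
  ((polar_deriv c N q)^`(j)).[z] =
  (q^`(j)).[z] + N%:R^-1 * ((c - z) * (q^`(j.+1)).[z] - j%:R * (q^`(j)).[z]).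
Proof.
rewrite /polar_deriv derivnD derivnZ mulrBl mul_polyC derivnB derivnZ.
rewrite [_ * q^`()]mulrC.
case: j => [|j]; first by rewrite !derivn0 !hornerE; ring.
have := derivnMXaddC j q^`() 0; rewrite polyC0 addr0 => ->.
rewrite !hornerE -!derivSn hornerMn -mulr_natr; ring.
Qed.

Fixpoint polar_eval (K : fieldType) (z : K) (cs : seq K) (q : {poly K}) : K :=
  if cs is c :: cs' then polar_eval z cs' (polar_deriv c (size cs) q) else q.[z].

Lemma polar_evalE (K : numFieldType) (z s : K) (r : seq K) (q : {poly K}) :
  polar_eval z [seq z - s * x | x <- r] q =
  \sum_(j < (size r).+1)
    (s ^+ j * (\prod_(x <- r) ('X - x%:P))`_(size r - j) / ((size r) ^_ j)%:R) *
    (q^`(j)).[z].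
Proof.
elim: r q => [|x r IH] q /=.
  by rewrite big_ord1 big_nil coefC ffactn0 divr1 !mul1r.
rewrite size_map IH big_cons; set n := size r; set G := \prod_(_ <- r) _.
pose F j : K := s ^+ j / (n.+1 ^_ j)%:R * (q^`(j)).[z].
transitivity (\sum_(j < n.+1) G`_(n - j) * (F j - x * F j.+1)); last first.
  rewrite [RHS](eq_bigr (fun j : 'I_n.+2 => (('X - x%:P) * G)`_(n.+1 - j) * F j)); last first.
    by move=> j _; rewrite /F; ring.
  by symmetry; apply: (@sum_coef_XsubC_mul _ K^o); rewrite size_prod_XsubC.
apply: eq_bigr => j _; rewrite horner_derivn_polar /F.
have jn : (j <= n)%N := leq_ord j.
have nz k : (0 < k)%N -> k%:R != 0 :> K by rewrite pnatr_eq0 -lt0n.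
have nj0 : (n ^_ j)%:R != 0 :> K by rewrite nz ?ffact_gt0.
have Nj0 : n.+1%:R - j%:R != 0 :> K by rewrite -natrB 1?ltnW // nz ?subn_gt0.
have ffactE : (n.+1 ^_ j)%:R = n.+1%:R * (n ^_ j)%:R / (n.+1%:R - j%:R) :> K.
  by rewrite -natrM -ffactSS ffactnSr natrM natrB 1?ltnW // mulfK.
rewrite ffactE ffactSS natrM exprS.
by field; rewrite -mulrS nj0 Nj0 nz.
Qed.

Lemma sqr_sum_le (R : realFieldType) (I : Type) (s : seq I) (F : I -> R) :
  (\sum_(i <- s) F i) ^+ 2 <= (size s)%:R * \sum_(i <- s) F i ^+ 2.
Proof.
elim: s => [|x s IH]; first by rewrite !big_nil expr0n mul0r.
rewrite !big_cons -natr1; move: IH.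
set A := \sum_(i <- s) F i; set B := \sum_(i <- s) F i ^+ 2; set m : R := (size s)%:R.
have m0 : 0 <= m by exact: ler0n.
have B0 : 0 <= B by apply: sumr_ge0 => i _; exact: sqr_ge0.
move=> IH; have := sqr_ge0 (A - m * F x).
have [m_eq0|m_gt0] := eqVneq m 0.
  have A0 : A = 0.
    by apply/eqP; rewrite -sqrf_eq0 eq_le sqr_ge0 andbT; rewrite m_eq0 mul0r in IH.
  by rewrite A0 m_eq0; nra.
have : 0 < m by rewrite lt_def m_gt0.
nra.
Qed.

Section Complex.
Variable R : rcfType.
Local Notation C := R[i].

Definition sqnorm (v : C) : R := Re v ^+ 2 + Im v ^+ 2.

Lemma sqnorm_ge0 (v : C) : 0 <= sqnorm v.
Proof. by apply: addr_ge0; exact: sqr_ge0. Qed.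

Lemma sqnorm_gt0 (v : C) : (0 < sqnorm v) = (v != 0).
Proof.
case: v => a b; rewrite lt_def sqnorm_ge0 andbT eq_complex /sqnorm /=.
by rewrite paddr_eq0 ?sqr_ge0 // !sqrf_eq0.
Qed.

Lemma Re_invc (v : C) : Re v^-1 = Re v / sqnorm v. Proof. by case: v. Qed.

Lemma Im_invc (v : C) : Im v^-1 = - Im v / sqnorm v. Proof. by case: v => a b /=; rewrite mulNr. Qed.

Lemma Re_sum (I : Type) (s : seq I) (F : I -> C) :
  Re (\sum_(i <- s) F i) = \sum_(i <- s) Re (F i).
Proof. exact: (raddf_sum (@Re R : Rcomplex R -> R)). Qed.

Lemma Im_sum (I : Type) (s : seq I) (F : I -> C) :
  Im (\sum_(i <- s) F i) = \sum_(i <- s) Im (F i).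
Proof. exact: (raddf_sum (@Im R : Rcomplex R -> R)). Qed.

Lemma ImB (u v : C) : Im (u - v) = Im u - Im v.
Proof. exact: (raddfB (@Im R : Rcomplex R -> R)). Qed.

Lemma sqnorm_sum_le (vs : seq C) :
  sqnorm (\sum_(v <- vs) v) <= (size vs)%:R * \sum_(v <- vs) sqnorm v.
Proof.
rewrite /sqnorm Re_sum Im_sum big_split mulrDr /=.
by apply: lerD; apply: sqr_sum_le.
Qed.

Lemma Im_invc_lt (b : R) (v : C) : 0 <= b < Im v -> b * sqnorm v^-1 + Im v^-1 < 0.
Proof.
case/andP=> b0 bv; have v0 : v != 0 by apply: contraTneq bv => ->; rewrite /= -leNgt.
have D0 : 0 < sqnorm v by rewrite sqnorm_gt0.
have -> : b * sqnorm v^-1 + Im v^-1 = (b - Im v) / sqnorm v.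
  rewrite {1}/sqnorm Re_invc Im_invc; move: D0; rewrite /sqnorm => D0.
  by field; rewrite gt_eqF.
by rewrite pmulr_llt0 ?invr_gt0 // subr_lt0.
Qed.

Lemma Im_sum_inv_lt (b : R) (vs : seq C) :
  vs != [::] -> 0 <= b -> (forall v, v \in vs -> b < Im v) ->
  b * \sum_(v <- vs) sqnorm v^-1 + Im (\sum_(v <- vs) v^-1) < 0.
Proof.
move=> vs0 b0 vs_up.
have : \sum_(v <- vs | v \in vs) (b * sqnorm v^-1 + Im v^-1) < \sum_(v <- vs | v \in vs) 0.
  apply: ltr_sum => [|v vin]; first by case: (vs) vs0 => // v r _; rewrite /= inE eqxx.
  by apply: Im_invc_lt; rewrite b0 vs_up.
by rewrite big1_eq Im_sum mulr_sumr -big_split big_seq.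
Qed.

Lemma Re_realcM (k : R) (v : C) : Re (k%:C * v) = k * Re v.
Proof. by case: v => a b /=; rewrite mul0r subr0. Qed.

Lemma Im_realcM (k : R) (v : C) : Im (k%:C * v) = k * Im v.
Proof. by case: v => a b /=; rewrite mul0r addr0. Qed.

(* The core of Laguerre's theorem: [u S = N] forces [Im u |S|^2 + N Im S = 0], whereas
   Cauchy-Schwarz and the termwise bound [Im u |v^-1|^2 + Im v^-1 < 0] make it negative. *)
Lemma polar_sum_neq (N : nat) (u : C) (vs : seq C) :
  (0 < N)%N -> (size vs <= N)%N -> 0 <= Im u -> (forall v, v \in vs -> Im u < Im v) ->
  u * \sum_(v <- vs) v^-1 != N%:R.
Proof.
move=> N_gt0 vsN u_up vs_up; apply/eqP; set S := \sum_(v <- _) _ => uS.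
have N0 : (N%:R : C) != 0 by rewrite pnatr_eq0 -lt0n.
have u0 : u != 0 by apply: contra_eq_neq uS => ->; rewrite mul0r eq_sym.
have vs0 : vs != [::] by apply: contra_eq_neq uS => vs0; rewrite /S vs0 big_nil mulr0 eq_sym.
have {}uS : S = (N%:R : R)%:C * u^-1 by rewrite rmorph_nat -uS mulrC mulKf.
have ImS : Im u * sqnorm S + N%:R * Im S = 0.
  rewrite uS /sqnorm Re_realcM Im_realcM Re_invc Im_invc; have : 0 < sqnorm u by rewrite sqnorm_gt0.
  by rewrite /sqnorm => D0; field; rewrite gt_eqF.
have terms_lt0 := Im_sum_inv_lt vs0 u_up vs_up.
have CS : sqnorm S <= N%:R * \sum_(v <- vs) sqnorm v^-1.
  have := sqnorm_sum_le [seq v^-1 | v <- vs]; rewrite !big_map size_map => /le_trans; apply.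
  by rewrite ler_wpM2r ?ler_nat // sumr_ge0 // => v _; exact: sqnorm_ge0.
have : (0 : R) < N%:R by rewrite ltr0n.
nra.
Qed.

End Complex.

Section Hyperbolic.
Variable R : realType.
Local Notation C := R[i].
Local Notation toC := (real_complex R).

Lemma map_poly_hyperbolic (p : {poly R}) (s : seq R) :
  p = lead_coef p *: \prod_(x <- s) ('X - x%:P) ->
  map_poly toC p = toC (lead_coef p) *: \prod_(y <- map toC s) ('X - y%:P).
Proof. by move=> {1}->; rewrite map_polyZ map_prod_XsubC big_map. Qed.

Lemma hyperbolic_root_real (p : {poly R}) (z : C) :
  hyperbolic p -> p != 0 -> root (map_poly toC p) z -> Im z = 0.
Proof.
case=> s /map_poly_hyperbolic -> p0.
rewrite rootZ ?fmorph_eq0 ?lead_coef_eq0 // root_prod_XsubC.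
by case/mapP => x _ ->.
Qed.

Lemma upper_root_free_hyperbolic (p : {poly R}) :
  (forall z : C, 0 < Im z -> ~~ root (map_poly toC p) z) -> hyperbolic p.
Proof.
move=> upper_free; have [->|p0] := eqVneq p 0.
  by exists [::]; rewrite lead_coef0 scale0r.
have [rs prs] := closed_field_poly_normal (map_poly toC p).
have rs_real z : z \in rs -> z = (Re z)%:C.
  move=> zin; have : root (map_poly toC p) z.
    by rewrite prs rootZ ?lead_coef_eq0 ?map_poly_eq0 // root_prod_XsubC.
  case: z {zin} => a b /= pz; congr (_ +i* _).
  have [b_lt0|b_gt0|//] := ltgtP b 0; last by move: (upper_free (a +i* b) b_gt0); rewrite pz.
  have : 0 < Im (a +i* b)^* by rewrite /= oppr_gt0.
  move/upper_free; rewrite -complex_root_conj -map_poly_comp.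
  by rewrite (@eq_map_poly _ _ _ toC) ?pz // => x; rewrite /= /conjc /= oppr0.
exists (map (@complex.Re R) rs); apply: (map_poly_inj toC).
rewrite [LHS]prs map_polyZ lead_coef_map rmorph_prod big_map.
congr (_ *: _); apply: eq_big_seq => z zin /=.
by rewrite map_polyXsubC /= -rs_real.
Qed.

Lemma hyperbolic_subr_deriv (c : R) (p : {poly R}) :
  hyperbolic p -> hyperbolic (p - c *: p^`()).
Proof.
have [->|p0 hp] := eqVneq p 0; first by rewrite deriv0 scaler0 subr0.
have [s /map_poly_hyperbolic qE] := hp.
apply: upper_root_free_hyperbolic => w w_up.
have qw : (map_poly toC p).[w] != 0.
  by apply: contraTN w_up => /(hyperbolic_root_real hp p0) ->; rewrite ltxx.
have logder := horner_logderiv qE qw; set S := \sum_(_ <- _) _ in logder.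
rewrite rmorphB /= map_polyZ -deriv_map /root !hornerE logder.
apply/negP => /eqP qcS.
have cS : c%:C * S = 1.
  have : (map_poly toC p).[w] * (1 - c%:C * S) == 0 by rewrite -[0]qcS; apply/eqP; ring.
  by rewrite mulf_eq0 (negbTE qw) subr_eq0 eq_sym => /eqP.
have s0 : s != [::] by apply: contra_eq_neq cS => s0; rewrite /S s0 big_nil mulr0 eq_sym oner_eq0.
have ImS : Im S < 0.
  have := @Im_sum_inv_lt _ 0 [seq w - y | y <- map toC s].
  rewrite mul0r add0r big_map -/S; apply=> //; first by rewrite -size_eq0 !size_map size_eq0.
  by move=> _ /mapP[_ /mapP[x _ ->] ->]; rewrite ImB /= subr0.
have := congr1 (@complex.Im R) cS; rewrite Im_realcM /= => /eqP; rewrite mulf_eq0 (lt_eqF ImS) orbF.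
by move=> /eqP c0; move: cS; rewrite c0 mul0r => /eqP; rewrite eq_sym oner_eq0.
Qed.

End Hyperbolic.

Lemma hyperbolic_sub_deriv_comp (R : realType) (s : R) (r : seq R) (p : {poly R}) :
  hyperbolic p -> hyperbolic (sub_deriv_comp s r p).
Proof. by move=> hp; elim: r => //= x r; exact: hyperbolic_subr_deriv. Qed.

Lemma size_polar_deriv (K : numFieldType) (c : K) (N : nat) (q : {poly K}) :
  (0 < N)%N -> (size q <= N.+1)%N -> (size (polar_deriv c N q) <= N)%N.
Proof.
move=> N_gt0 sq; apply/leq_sizeP => j Nj.
have qj1 : q`_j.+1 = 0 by rewrite nth_default // (leq_trans sq).
have -> : (polar_deriv c N q)`_j = q`_j * (1 - N%:R^-1 * j%:R).
  rewrite /polar_deriv coefD coefZ mulrBl coefB coefCM coefXM !coef_deriv qj1 mul0rn mulr0 sub0r.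
  case: j {Nj qj1} => [|j] /=; first by rewrite oppr0 !mulr0 addr0 subr0 mulr1.
  by rewrite -(mulr_natr q`_j.+1); ring.
have [->|jN] := eqVneq j N; first by rewrite mulVf ?subrr ?mulr0 // pnatr_eq0 -lt0n.
by rewrite nth_default ?mul0r // (leq_trans sq) // ltn_neqAle eq_sym jN.
Qed.

Section Laguerre.
Variable R : rcfType.
Local Notation C := R[i].

Lemma polar_deriv_root_free (c : C) (N : nat) (q : {poly C}) :
  (0 < N)%N -> (size q <= N.+1)%N -> (forall w, Im c <= Im w -> ~~ root q w) ->
  forall w, Im c <= Im w -> ~~ root (polar_deriv c N q) w.
Proof.
move=> N_gt0 sq q_free w cw.
have q0 : q != 0 by apply: contraTneq (q_free c (lexx _)) => ->; rewrite root0.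
have [rs qrs] := closed_field_poly_normal q.
have lc0 : lead_coef q != 0 by rewrite lead_coef_eq0.
have rs_low y : y \in rs -> Im w - Im c < Im (w - y).
  move=> yin; rewrite ImB ltrD2l ltrN2 ltNge; apply: contraL yin => /q_free.
  by rewrite qrs rootZ // root_prod_XsubC.
have size_rs : (size rs <= N)%N by move: sq; rewrite qrs size_scale // size_prod_XsubC.
have qw := q_free w cw; have logder := horner_logderiv qrs qw.
have := @polar_sum_neq _ N (w - c) [seq w - y | y <- rs] N_gt0.
rewrite size_map big_map ImB subr_ge0 => /(_ size_rs cw); set S := \sum_(_ <- _) _.
move=> /(_ _)/negbTE uS; apply/negP; rewrite /root.
have -> : (polar_deriv c N q).[w] = q.[w] * (1 - N%:R^-1 * ((w - c) * S)).
  by rewrite /polar_deriv hornerD hornerZ hornerM hornerD hornerN hornerC hornerX logder -/S; ring.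
rewrite mulf_eq0 -/(root q w) (negbTE qw) /= subr_eq0 eq_sym => /eqP NS.
have N0 : (N%:R : C) != 0 by rewrite pnatr_eq0 -lt0n.
have uSN : (w - c) * S = N%:R by apply: (mulfI (invr_neq0 N0)); rewrite NS mulVf.
have : ((w - c) * S == N%:R) = false by apply: uS => _ /mapP[y yin ->]; exact: rs_low.
by rewrite uSN eqxx.
Qed.

Lemma polar_eval_neq0 (z : C) (cs : seq C) (q : {poly C}) :
  (forall c, c \in cs -> Im c = Im z) -> (size q <= (size cs).+1)%N ->
  (forall w, Im z <= Im w -> ~~ root q w) -> polar_eval z cs q != 0.
Proof.
elim: cs q => [|c cs IH] q /= cs_z sq q_free; first exact: q_free.
have cz : Im c = Im z by apply: cs_z; rewrite inE eqxx.
apply: IH => [c' c'in|| ]; first by apply: cs_z; rewrite inE c'in orbT.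
  exact: size_polar_deriv.
by rewrite -cz; apply: polar_deriv_root_free => //; rewrite cz.
Qed.

End Laguerre.

Section Nuij.
Variable R : realType.
Variable d : nat.
Local Notation toC := (real_complex R).

Lemma coef_monic_of_top (b : 'rV[R]_d) : (monic_of b)`_d = 1.
Proof.
rewrite coefD coefXn eqxx coef_sum big1 ?addr0 // => k _.
by rewrite coefZ coefXn gtn_eqF ?mulr0 //; have := ltn_ord k; lia.
Qed.

Lemma coef_monic_of (b : 'rV[R]_d) (k : 'I_d) : (monic_of b)`_(d - k.+1) = b 0 k.
Proof.
have kd := ltn_ord k.
rewrite coefD coefXn ltn_eqF; last by lia.
rewrite add0r coef_sum (bigD1 k) //= coefZ coefXn eqxx mulr1 big1 ?addr0 // => j jk.
rewrite coefZ coefXn; case: eqP => [e|]; last by rewrite mulr0.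
by move: jk; rewrite -(inj_eq val_inj) /=; have := ltn_ord j; lia.
Qed.

Lemma size_monic_of (b : 'rV[R]_d) : size (monic_of b) = d.+1.
Proof.
apply/eqP; rewrite eqn_leq; apply/andP; split; last first.
  rewrite ltnNge; apply/negP => /leq_sizeP/(_ d (leqnn d)).
  by rewrite coef_monic_of_top => /eqP; rewrite oner_eq0.
apply/leq_sizeP => j dj; rewrite coefD coefXn gtn_eqF // add0r coef_sum big1 // => k _.
by rewrite coefZ coefXn gtn_eqF ?mulr0 //; lia.
Qed.

Lemma monic_of_monic (b : 'rV[R]_d) : monic_of b \is monic.
Proof. by rewrite monicE lead_coefE size_monic_of coef_monic_of_top. Qed.

Lemma H1_splits (b : 'rV[R]_d) :
  H1 b -> exists2 r : seq R, size r = d & monic_of b = \prod_(x <- r) ('X - x%:P).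
Proof.
case=> r; rewrite (monicP (monic_of_monic b)) scale1r => br; exists r => //.
by have := size_monic_of b; rewrite br size_prod_XsubC => -[].
Qed.

Lemma monic_of_deriv_sum (b : 'rV[R]_d) (w : nat -> R) (p : {poly R}) : w 0%N = 1 ->
  p + \sum_(k < d) (b 0 k * w k.+1) *: p^`(k.+1) =
  \sum_(j < d.+1) (w j * (monic_of b)`_(d - j)) *: p^`(j).
Proof.
move=> w0; rewrite big_ord_recl subn0 coef_monic_of_top w0 mulr1 scale1r.
by congr (_ + _); apply: eq_bigr => k _; rewrite lift0 /= coef_monic_of mulrC.
Qed.

Lemma Nuij_H1_bmap (a : 'rV[R]_d) : Nuij a -> H1 (bmap a).
Proof.
have Xd_hyp : hyperbolic ('X^d : {poly R}).
  by exists (nseq d 0); rewrite lead_coefXn scale1r big_nseq subr0 iter_mulr_1.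
move/(_ 'X^d (size_polyXn R d) Xd_hyp 1); congr hyperbolic; congr (_ + _).
apply: eq_bigr => k _; rewrite derivnXn expr1n mulr1 mxE -scaler_nat scalerA.
by congr (_ *: _); exact: mulrC.
Qed.

Lemma H1_Nuij (b : 'rV[R]_d) : H1 b -> Nuij b.
Proof.
case/H1_splits=> r sr br p _ hp s.
rewrite (monic_of_deriv_sum _ (w := fun j => s ^+ j)) ?expr0 // br -sr.
by rewrite -sub_deriv_compE; exact: hyperbolic_sub_deriv_comp.
Qed.

Lemma H1_bmap_Nuij (a : 'rV[R]_d) : H1 (bmap a) -> Nuij a.
Proof.
case/H1_splits=> r sr br p sp hp s.
have p0 : p != 0 by rewrite -size_poly_eq0 sp.
pose w j : R := s ^+ j / (d ^_ j)%:R.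
have -> : p + \sum_(k < d) (a 0 k * s ^+ k.+1) *: p^`(k.+1) =
          \sum_(j < d.+1) (w j * (monic_of (bmap a))`_(d - j)) *: p^`(j).
  rewrite -monic_of_deriv_sum /w ?ffactn0 ?divr1 //; congr (_ + _); apply: eq_bigr => k _.
  have dk : (d ^_ k.+1)%:R != 0 :> R by rewrite pnatr_eq0 -lt0n ffact_gt0.
  by rewrite mxE; congr (_ *: _); field.
apply: upper_root_free_hyperbolic => z z_up.
set cs := [seq z - s%:C * x | x <- map toC r].
have : polar_eval z cs (map_poly toC p) != 0.
  apply: polar_eval_neq0 => [_ /mapP[_ /mapP[x _ ->] ->]||v zv].
  - by rewrite ImB Im_realcM /= mulr0 subr0.
  - by rewrite size_map_poly sp !size_map sr.
  apply: contraTN zv => /(hyperbolic_root_real hp p0) ->; rewrite -ltNge.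
  exact: z_up.
rewrite polar_evalE size_map sr /root rmorph_sum horner_sum.
congr (~~ (_ == 0)); apply: eq_bigr => j _.
rewrite [RHS]/= map_polyZ hornerZ -derivn_map big_map -map_prod_XsubC -br coef_map.
by rewrite /w !rmorphM /= fmorphV rmorphXn rmorph_nat; congr (_ * _); rewrite mulrAC.
Qed.

End Nuij.

Theorem corollary2p4 (R : realType) (d : nat) (hd : (1 <= d)%N) :
  (forall b : 'rV[R]_d, H1 b -> Nuij b) /\
  (forall a : 'rV[R]_d, Nuij a <-> H1 (bmap a)).
Proof.
split; first exact: H1_Nuij.
by move=> a; split; [exact: Nuij_H1_bmap | exact: H1_bmap_Nuij].
Qed.
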